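(* Let $M$ be a loopless matroid of rank $k$ on a ground set $E$ of size $n$. There is an injective map sending each chain of flats $F_0\subsetneq F_1\subsetneq\cdots\subsetneq F_m$ of $M$ (for any $m\ge0$) to a chain of flats $G_0\subsetneq G_1\subsetneq\cdots\subsetneq G_m$ of the uniform matroid $U_{k,n}$ on $E$, such that $\mathrm{rk}_M(F_j)=\mathrm{rk}_{U_{k,n}}(G_j)$ for all $0\le j\le m$.
   Context: $U_{k,n}$ on the ground set $E$ ($|E|=n$) is the matroid whose bases are all $k$-subsets of $E$. Flats of a matroid are subsets $F$ such that adding any element strictly increases the rank; loopless means every singleton has rank $1$. *)

From mathcomp Require Import all_boot.
Set Implicit Arguments. Unset Strict Implicit. Unset Printing Implicit Defensive.

Section Matroid.
Variable E : finType.

Definition is_matroid (I : pred {set E}) : Prop :=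
  [/\ I set0,
      (forall A B : {set E}, B \subset A -> I A -> I B) &
      (forall A B : {set E}, I A -> I B -> #|A| < #|B| ->
          exists2 x, x \in B :\: A & I (x |: A))].

Definition rk (I : pred {set E}) (A : {set E}) : nat :=
  \max_(B : {set E} | (B \subset A) && I B) #|B|.

Definition is_flat (I : pred {set E}) (F : {set E}) : bool :=
  [forall x, (x \notin F) ==> (rk I F < rk I (x |: F))].

Definition loopless (I : pred {set E}) : Prop :=
  forall x : E, rk I [set x] = 1.

Definition uniform_indep (k : nat) : pred {set E} :=
  fun A => [exists B : {set E}, (#|B| == k) && (A \subset B)].

Definition flat_chain (I : pred {set E}) (s : seq {set E}) : bool :=
  [&& size s != 0, all (is_flat I) s & sorted (fun A B : {set E} => A \proper B) s].

End Matroid.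

(** Choose bases B_0 ⊆ B_1 ⊆ ... ⊆ B_m of the flats F_0 ⊂ F_1 ⊂ ... ⊂ F_m,
    extending each one to the next, and put G_j := B_j, except that a basis
    of the whole matroid (which can only be B_m) is replaced by E.  Sets of
    size < k are flats of U_{k,n} of rank their size and E is its unique flat
    of rank k, so this gives a chain of flats of U_{k,n} with the same ranks.
    The map is injective because F_j is recovered from G_j as the closure
    {x | rk_M(G_j ∪ x) = rk_M(G_j)}. *)
From Stdlib Require ClassicalEpsilon.
From mathcomp Require Import all_boot zify.

Set Implicit Arguments. Unset Strict Implicit. Unset Printing Implicit Defensive.

Section Rank.
Variables (E : finType) (J : pred {set E}).

Lemma leq_card_rk (A B : {set E}) : B \subset A -> J B -> #|B| <= rk J A.
Proof.
move=> sBA JB.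
apply: (@leq_bigmax_cond _ (fun B : {set E} => (B \subset A) && J B) (fun B => #|B|)).
by rewrite sBA.
Qed.

Lemma rk_attained (A : {set E}) : J set0 ->
  exists2 B : {set E}, (B \subset A) && J B & #|B| = rk J A.
Proof.
move=> J0; have /card_gt0P/(eq_bigmax_cond (fun B : {set E} => #|B|)) :
    exists B, B \in [pred B : {set E} | (B \subset A) && J B].
  by exists set0; rewrite inE sub0set.
case=> B JB eB; exists B; first by rewrite inE in JB.
by rewrite /rk -eB; apply: eq_bigl => C; rewrite inE.
Qed.

Lemma rk_le_card (A : {set E}) : rk J A <= #|A|.
Proof. by apply/bigmax_leqP => B /andP[sBA _]; apply: subset_leq_card. Qed.

Lemma rkS (A A' : {set E}) : A \subset A' -> rk J A <= rk J A'.
Proof.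
move=> sAA'; apply/bigmax_leqP => B /andP[sBA JB].
exact: leq_card_rk (subset_trans sBA sAA') JB.
Qed.

Lemma flat_rk_proper (F F' : {set E}) : is_flat J F -> F \proper F' -> rk J F < rk J F'.
Proof.
move=> /forallP flatF /properP[sFF' [x xF' xF]].
apply: leq_trans (implyP (flatF x) xF) (rkS _).
by rewrite subUset sFF' sub1set xF'.
Qed.

Lemma flat_rk_setT (F : {set E}) : is_flat J F -> rk J F = rk J setT -> F = setT.
Proof.
move=> /forallP flatF rkF; apply/setP => x; rewrite inE; apply: contraT => xF.
by have := implyP (flatF x) xF; rewrite rkF ltnNge rkS ?subsetT.
Qed.

End Rank.

Section Matroid.
Variables (E : finType) (I : pred {set E}).
Hypothesis matroidI : is_matroid I.

Definition basis_of (F B : {set E}) : bool := [&& B \subset F, I B & #|B| == rk I F].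

Definition cl (A : {set E}) : {set E} := [set x | rk I (x |: A) == rk I A].

Lemma rk_indep (B : {set E}) : I B -> rk I B = #|B|.
Proof. by move=> IB; apply/eqP; rewrite eqn_leq rk_le_card leq_card_rk. Qed.

Lemma indep_extend_basis (G F : {set E}) : I G -> G \subset F ->
  exists2 B : {set E}, G \subset B & basis_of F B.
Proof.
case: matroidI => I0 _ augment IG sGF.
pose P (C : {set E}) := [&& G \subset C, C \subset F & I C].
have PG : P G by rewrite /P subxx sGF.
have [B /and3P[sGB sBF IB] maxB] := arg_maxnP (fun C : {set E} => #|C|) PG.
exists B => //; rewrite /basis_of sBF IB eqn_leq leq_card_rk //=.
rewrite leqNgt; apply/negP => ltB.
have [D /andP[sDF ID] eD] := rk_attained F I0; rewrite -eD in ltB.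
move/augment: ltB => /(_ IB ID) [y /setDP[yD yB] IyB].
have /maxB : P (y |: B).
  by rewrite /P IyB subUset sub1set (subsetP sDF) // sBF (subset_trans sGB) ?subsetUr.
by rewrite /= cardsU1 yB add1n ltnn.
Qed.

Lemma cl_basis_of (F B : {set E}) : is_flat I F -> basis_of F B -> cl B = F.
Proof.
case: matroidI => I0 _ augment /forallP flatF /and3P[sBF IB /eqP cardB].
apply/setP => x; rewrite inE (rk_indep IB) cardB.
have [xF | xNF] := boolP (x \in F).
  rewrite eqn_leq rkS ?subUset ?sub1set ?xF //=.
  by rewrite -cardB -(rk_indep IB) rkS ?subsetUr.
apply/negbTE; rewrite neq_ltn; apply/orP; right.
have [D /andP[sDxF ID] eD] := rk_attained (x |: F) I0.
have /augment : #|B| < #|D| by rewrite eD cardB (implyP (flatF x) xNF).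
case/(_ IB ID) => y /setDP[yD yB] IyB.
have yx : y = x.
  apply: contraTeq (leqnn (rk I F)) => yNx; rewrite -ltnNge.
  have yF : y \in F by move: (subsetP sDxF y yD); rewrite in_setU1 (negbTE yNx).
  apply: leq_trans (leq_card_rk (_ : y |: B \subset F) IyB).
    by rewrite cardsU1 yB cardB.
  by rewrite subUset sub1set yF.
by rewrite -yx (rk_indep IyB) cardsU1 yB cardB.
Qed.

Lemma nested_bases (c : seq {set E}) (G : {set E}) :
  sorted (fun A B : {set E} => A \subset B) c -> I G -> G \subset head setT c ->
  exists b : seq {set E},
    [/\ size b = size c,
        forall j, j < size c -> basis_of (nth set0 c j) (nth set0 b j) &
        path (fun A B : {set E} => A \subset B) G b].
Proof.
elim: c G => [|F c IHc] G /= sorted_c IG sGF; first by exists [::].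
have [B sGB basisB] := indep_extend_basis IG sGF.
have [sBF IB _] := and3P basisB.
have sBc : B \subset head setT c.
  case: c sorted_c {IHc} => [|F' c] /=; first by rewrite subsetT.
  by case/andP => /(subset_trans sBF).
have [b [size_b basis_b path_b]] := IHc B (path_sorted sorted_c) IB sBc.
by exists (B :: b); split => /=; [rewrite size_b | case | rewrite sGB].
Qed.

End Matroid.

Lemma exists_superset_card (E : finType) (B : {set E}) (m : nat) :
  #|B| <= m <= #|E| -> exists2 C : {set E}, B \subset C & #|C| = m.
Proof.
have [t] := ubnP (m - #|B|); elim: t B => // t IH B ltmB /andP[leBm lemE].
have [eqBm | neBm] := eqVneq #|B| m; first by exists B.
have ltBm : #|B| < m by rewrite ltn_neqAle neBm leBm.
have /properP[_ [x _ xNB]] : B \proper setT.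
  by rewrite properEcard subsetT cardsT (leq_trans ltBm lemE).
have [||C sxBC cardC] := IH (x |: B); rewrite ?cardsU1 ?xNB ?lemE ?andbT //.
  by move: ltmB ltBm; clear; lia.
by exists C => //; apply: subset_trans sxBC; apply: subsetUr.
Qed.

Section Uniform.
Variables (E : finType) (k : nat).
Hypothesis leq_k_card : k <= #|E|.
Local Notation U := (@uniform_indep E k).

Lemma rk_uniform_small (A : {set E}) : #|A| <= k -> rk U A = #|A|.
Proof.
move=> leAk; apply/eqP; rewrite eqn_leq rk_le_card leq_card_rk //.
have [C sAC cardC] : exists2 C : {set E}, A \subset C & #|C| = k.
  by apply: exists_superset_card; rewrite leAk.
by apply/existsP; exists C; rewrite cardC eqxx sAC.
Qed.

Lemma rk_uniform_setT : rk U setT = k.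
Proof.
apply/eqP; rewrite eqn_leq; apply/andP; split.
  apply/bigmax_leqP => B /andP[_ /existsP[C /andP[/eqP <- sBC]]].
  exact: subset_leq_card.
have [C _ cardC] : exists2 C : {set E}, set0 \subset C & #|C| = k.
  by apply: exists_superset_card; rewrite cards0.
by rewrite -{1}cardC -rk_uniform_small ?cardC // rkS ?subsetT.
Qed.

Lemma uniform_flat_small (A : {set E}) : #|A| < k -> is_flat U A.
Proof.
move=> ltAk; apply/forallP => x; apply/implyP => xNA.
by rewrite !rk_uniform_small ?cardsU1 ?xNA // ltnW.
Qed.

End Uniform.

Section UniformChain.
Variables (E : finType) (I : pred {set E}).
Hypothesis matroidI : is_matroid I.
Local Notation k := (rk I setT).
Local Notation U := (@uniform_indep E k).

Definition to_uniform (B : {set E}) : {set E} := if #|B| == k then setT else B.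

Lemma leq_rk_card : k <= #|E|.
Proof. by rewrite -cardsT rk_le_card. Qed.

Lemma basis_card_le_rk (F B : {set E}) : basis_of I F B -> #|B| <= k.
Proof. by case/and3P => _ _ /eqP ->; rewrite rkS ?subsetT. Qed.

Lemma to_uniform_flat (F B : {set E}) : basis_of I F B -> is_flat U (to_uniform B).
Proof.
move=> /basis_card_le_rk leBk; rewrite /to_uniform.
case: eqP => [_ | /eqP neBk]; first by apply/forallP => x; rewrite inE.
by apply: (uniform_flat_small leq_rk_card); rewrite ltn_neqAle neBk leBk.
Qed.

Lemma rk_to_uniform (F B : {set E}) :
  basis_of I F B -> rk U (to_uniform B) = rk I F.
Proof.
move=> basisB; have [_ _ /eqP <-] := and3P basisB; rewrite /to_uniform.
case: eqP => [-> | _]; first exact: rk_uniform_setT leq_rk_card.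
exact: (rk_uniform_small leq_rk_card (basis_card_le_rk basisB)).
Qed.

Lemma cl_to_uniform (F B : {set E}) :
  is_flat I F -> basis_of I F B -> cl I (to_uniform B) = F.
Proof.
move=> flatF basisB; rewrite /to_uniform; case: eqP => [cardB | _].
  have [_ _ /eqP rkF] := and3P basisB.
  rewrite (flat_rk_setT flatF) -?rkF //.
  by apply/setP => x; rewrite !inE setUT eqxx.
exact: cl_basis_of.
Qed.

Lemma to_uniform_proper (F F' B B' : {set E}) : is_flat I F -> F \proper F' ->
  basis_of I F B -> basis_of I F' B' -> B \subset B' ->
  to_uniform B \proper to_uniform B'.
Proof.
move=> flatF ltFF' basisB basisB' sBB'.
have [_ _ /eqP cardB] := and3P basisB; have [_ _ /eqP cardB'] := and3P basisB'.
have ltBB' : #|B| < #|B'| by rewrite cardB cardB' flat_rk_proper.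
have sB'u : B' \subset to_uniform B' by rewrite /to_uniform; case: ifP; rewrite ?subsetT.
have -> : to_uniform B = B.
  by rewrite /to_uniform ifN // neq_ltn (leq_trans ltBB' (basis_card_le_rk basisB')).
by rewrite properEcard (subset_trans sBB') // (leq_trans ltBB') ?subset_leq_card.
Qed.

Definition uniform_chain_of (c g : seq {set E}) : Prop :=
  [/\ flat_chain U g, size g = size c,
      forall j, j < size c -> rk I (nth set0 c j) = rk U (nth set0 g j) &
      map (cl I) g = c].

Lemma exists_uniform_chain_of (c : seq {set E}) :
  flat_chain I c -> exists g, uniform_chain_of c g.
Proof.
case/and3P => c_nil flats sorted_c; have [I0 _ _] := matroidI.
have sorted_sub_c := sub_sorted (fun A B : {set E} => @proper_sub _ A B) sorted_c.
have [b [size_b basis_b path_b]] := nested_bases matroidI sorted_sub_c I0 (sub0set _).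
have flat_c j : j < size c -> is_flat I (nth set0 c j).
  by move=> /(mem_nth set0); apply: (allP flats).
have nth_g j : j < size c -> nth set0 (map to_uniform b) j = to_uniform (nth set0 b j).
  by move=> ltj; rewrite (nth_map set0) ?size_b.
exists (map to_uniform b); split; rewrite ?size_map //.
- rewrite /flat_chain size_map size_b c_nil /=; apply/andP; split.
    apply/(all_nthP set0) => j; rewrite size_map size_b => ltj.
    by rewrite nth_g //; apply: to_uniform_flat (basis_b j ltj).
  apply/(sortedP set0) => j; rewrite size_map size_b => ltj.
  have ltj' := ltnW ltj; rewrite !nth_g //.
  apply: to_uniform_proper (flat_c _ ltj') _ (basis_b _ ltj') (basis_b _ ltj) _.
    by move/(sortedP set0): sorted_c; apply.
  by move/path_sorted/(sortedP set0): path_b; apply; rewrite size_b.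
- by move=> j ltj; rewrite nth_g // (rk_to_uniform (basis_b j ltj)).
apply: (@eq_from_nth _ set0); rewrite !size_map // => j; rewrite size_b => ltj.
rewrite (nth_map set0) ?size_map ?size_b // nth_g //.
exact: cl_to_uniform (flat_c j ltj) (basis_b j ltj).
Qed.

End UniformChain.

Theorem lemma3p36 (E : finType) (I : pred {set E}) (k n : nat) :
  #|E| = n -> is_matroid I -> loopless I -> rk I [set: E] = k ->
  exists f : seq {set E} -> seq {set E},
    {in flat_chain I &, injective f} /\
    (forall c, flat_chain I c ->
       [/\ flat_chain (@uniform_indep E k) (f c),
           size (f c) = size c &
           forall j, j < size c ->
             rk I (nth set0 c j) = rk (@uniform_indep E k) (nth set0 (f c) j)]).
Proof.
move=> _ matroidI _ <-.
pose f c := ClassicalEpsilon.epsilon (inhabits [::]) (uniform_chain_of I c).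
have fP c : flat_chain I c -> uniform_chain_of I c (f c).
  by move=> chain_c; apply: ClassicalEpsilon.epsilon_spec; apply: exists_uniform_chain_of.
exists f; split=> [c1 c2 chain1 chain2 eq_f | c /fP[]//].
by have [_ _ _ <-] := fP c1 chain1; have [_ _ _ <-] := fP c2 chain2; rewrite eq_f.
Qed.
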